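(* Let $n\ge1$ be an integer, $I,\Lambda$ non-empty sets and $P$ a $\Lambda\times I$ matrix with entries in $\mathbb{Z}_{n}\cup\{\mathbf{0}\}$. Let $A$ be a finite alphabet. Every language $L\subseteq A^{+}$ recognised by the Rees zero-matrix semigroup $M^{0}[\mathbb{Z}_{n};I,\Lambda;P]$ has generalised star-height at most $1$.
   Context: $\mathbb{Z}_n$ is the cyclic group of order $n$ written additively. For a group $G$, non-empty sets $I,\Lambda$ and a $\Lambda\times I$ matrix $P=(p_{\lambda i})$ with entries in $G\cup\{\mathbf{0}\}$ ($\mathbf{0}$ a new symbol), the Rees zero-matrix semigroup $M^{0}[G;I,\Lambda;P]$ is $(I\times G\times\Lambda)\cup\{\mathbf{0}\}$ with $(i,g,\lambda)(j,h,\mu)=(i,g\,p_{\lambda j}\,h,\mu)$ if $p_{\lambda j}\ne\mathbf{0}$, $=\mathbf{0}$ if $p_{\lambda j}=\mathbf{0}$, and $x\mathbf{0}=\mathbf{0}x=\mathbf{0}$. A language $L\subseteq A^{+}$ is recognised by a semigroup $T$ if there is a semigroup morphism $\psi:A^{+}\to T$ and a subset $X\subseteq T$ with $L=X\psi^{-1}$. Generalised regular expressions over $A$: $\emptyset$, $\varepsilon$ and each letter are expressions; if $E,F$ are expressions so are $E\cup F$, $EF$, $E^{\ast}$, $E^{c}$ (complement in $A^{\ast}$). Star-height: $h(\emptyset)=h(\varepsilon)=h(a)=0$, $h(E\cup F)=h(EF)=\max\{h(E),h(F)\}$, $h(E^{\ast})=h(E)+1$, $h(E^{c})=h(E)$;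 the star-height of a language is the minimum of $h(E)$ over expressions $E$ representing it. *)

From mathcomp Require Import all_boot all_order all_algebra.
From Stdlib Require List.
Set Implicit Arguments. Unset Strict Implicit. Unset Printing Implicit Defensive.
Import GRing.Theory.

(* Cyclic group Z_n (n >= 1), written additively: ordinals mod n.
   For n >= 1, n.-1.+1 = n. *)
Definition Zn (n : nat) : zmodType := 'I_n.-1.+1.

(* Rees zero-matrix semigroup M^0[G; I, Lambda; P]; None is the zero. *)
Definition rees (G : zmodType) (I L : Type) : Type := option (I * G * L).

Definition rees_mul (G : zmodType) (I L : Type) (P : L -> I -> option G)
  (x y : rees G I L) : rees G I L :=
  match x, y with
  | Some (i, g, l), Some (j, h, m) =>
      match P l j with
      | Some p => Some (i, (g + p + h)%R, m)
      | None => None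
      end
  | _, _ => None
  end.

(* L subset A^+ is recognised by a semigroup (T, mul): there is a semigroup
   morphism psi : A^+ -> T (represented on non-empty words) and X subset T
   with L = X psi^{-1}. *)
Definition recognised (A : Type) (T : Type) (mul : T -> T -> T)
  (Lang : seq A -> Prop) : Prop :=
  exists (psi : seq A -> T) (X : T -> Prop),
    (forall u v, u <> [::] -> v <> [::] -> psi (u ++ v) = mul (psi u) (psi v)) /\
    (forall w, Lang w <-> (w <> [::] /\ X (psi w))).

Inductive gre (A : Type) : Type :=
| GEmpty
| GEps
| GLet (a : A)
| GUnion (E F : gre A)
| GCat (E F : gre A)
| GStar (E : gre A)
| GCompl (E : gre A).

Arguments GEmpty {A}.
Arguments GEps {A}.

Definition star_lang (A : Type) (K : seq A -> Prop) (w : seq A) : Prop :=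
  exists ws : seq (seq A), (forall u, List.In u ws -> K u) /\ w = flatten ws.

Fixpoint gre_lang (A : Type) (E : gre A) : seq A -> Prop :=
  match E with
  | GEmpty => fun _ => False
  | GEps => fun w => w = [::]
  | GLet a => fun w => w = [:: a]
  | GUnion E F => fun w => gre_lang E w \/ gre_lang F w
  | GCat E F => fun w => exists u v, w = u ++ v /\ gre_lang E u /\ gre_lang F v
  | GStar E => star_lang (gre_lang E)
  | GCompl E => fun w => ~ gre_lang E w
  end.

Fixpoint star_height (A : Type) (E : gre A) : nat :=
  match E with
  | GEmpty | GEps | GLet _ => 0
  | GUnion E F | GCat E F => maxn (star_height E) (star_height F)
  | GStar E => (star_height E).+1
  | GCompl E => star_height E
  end.

Definition gsh_le (A : Type) (k : nat) (Lang : seq A -> Prop) : Prop :=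
  exists E : gre A, (star_height E <= k)%N /\ forall w, gre_lang E w <-> Lang w.

From mathcomp Require Import all_boot all_order all_algebra.
From Stdlib Require Import Classical.
Set Implicit Arguments. Unset Strict Implicit. Unset Printing Implicit Defensive.
Import GRing.Theory.

(* A nonzero product t(c_1) ... t(c_k) in M^0[G; I, Lambda; P] is
   (i_{c_1}, sum_j g_{c_j} + sum_j p_{lambda_{c_j} i_{c_{j+1}}}, lambda_{c_k}),
   and it is zero exactly when some letter or some two-letter factor of the
   word is sent to zero.  For G = Z_n the image of a word is therefore
   determined by its first and last letters, its factors of length at most 2,
   and the numbers modulo n of occurrences of each letter and of each factor ab
   with a != b (those of aa are then determined too).  Each of these finitely
   many properties defines a language of star-height at most 1: occurrence of
   a factor is star-free, and since occurrences of a letter or of ab with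
   a != b cannot overlap, a word with m of them is a product of m blocks
   (word avoiding the factor).(factor) followed by a word avoiding it, so
   counting modulo n needs a single star over n such blocks.  A recognised
   language is saturated by these finitely many tests, hence a Boolean
   combination of them. *)

Section GeneralisedStarHeight.
Variable A : Type.
Implicit Types (L K : seq A -> Prop) (k : nat).

Lemma gsh_ext k L L' : gsh_le k L -> (forall w, L w <-> L' w) -> gsh_le k L'.
Proof. by move=> [E [hE EL]] LL'; exists E; split=> // w; rewrite EL. Qed.

Lemma gsh_or k L K : gsh_le k L -> gsh_le k K -> gsh_le k (fun w => L w \/ K w).
Proof.
move=> [E [hE EL]] [F [hF FK]]; exists (GUnion E F); split=> [|w /=].
  by rewrite /= geq_max hE hF.
by rewrite EL FK.
Qed.

Lemma gsh_not k L : gsh_le k L -> gsh_le k (fun w => ~ L w).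
Proof. by move=> [E [hE EL]]; exists (GCompl E); split=> //= w; rewrite EL. Qed.

Lemma gsh_and k L K : gsh_le k L -> gsh_le k K -> gsh_le k (fun w => L w /\ K w).
Proof.
move=> shL shK; apply: (gsh_ext (gsh_not (gsh_or (gsh_not shL) (gsh_not shK)))).
by move=> w; split=> [LK|]; [split; apply: NNPP => ?; apply: LK|]; tauto.
Qed.

Lemma gsh_True k : gsh_le k (fun _ : seq A => True).
Proof. by exists (GCompl GEmpty); split=> // w; split=> // _ []. Qed.

Lemma gsh_False k : gsh_le k (fun _ : seq A => False).
Proof. by exists GEmpty; split. Qed.

Lemma gsh_saturated_seq (J : eqType) (K : J -> seq A -> Prop) (s : seq J) L :
  (forall j, j \in s -> gsh_le 1 (K j)) ->
  (forall w w', (forall j, j \in s -> (K j w <-> K j w')) -> L w -> L w') ->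
  gsh_le 1 L.
Proof.
elim: s L => [|j s IH] L shK satL.
  have [[w0 Lw0]|noL] := classic (exists w, L w).
    by apply: (gsh_ext (gsh_True 1)) => w; split=> // _; apply: (satL w0).
  by apply: (gsh_ext (gsh_False 1)) => w; split=> // Lw; apply: noL; exists w.
have shKj : gsh_le 1 (K j) by apply: shK; rewrite inE eqxx.
(* The words of L on which K j has the truth value b, up to the tests of s. *)
pose slice (b : Prop) w :=
  exists w', (K j w' <-> b) /\ L w' /\ forall j', j' \in s -> (K j' w <-> K j' w').
have shslice b : gsh_le 1 (slice b).
  apply: IH => [j' js | w1 w2 eq12 [w' [bw' [Lw' eq1']]]].
    by apply: shK; rewrite inE js orbT.
  by exists w'; split=> //; split=> // j' js; move: (eq12 j' js) (eq1' j' js); tauto.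
apply: (gsh_ext (gsh_or (gsh_and shKj (shslice True))
                        (gsh_and (gsh_not shKj) (shslice False)))) => w.
have satLj w' : (K j w' <-> K j w) ->
    (forall j', j' \in s -> (K j' w <-> K j' w')) -> L w' -> L w.
  move=> eqj eqs; apply: satL => j'; rewrite inE => /predU1P [-> //| js].
  by move: (eqs j' js); tauto.
split=> [[[Kw [w' [bw' [Lw' eqs]]]] | [Kw [w' [bw' [Lw' eqs]]]]] | Lw].
- by apply: (satLj w') => //; tauto.
- by apply: (satLj w') => //; tauto.
have [Kw|Kw] := classic (K j w); [left | right]; split=> //; exists w; tauto.
Qed.

Lemma gsh_saturated (J : finType) (K : J -> seq A -> Prop) L :
  (forall j, gsh_le 1 (K j)) ->
  (forall w w', (forall j, K j w <-> K j w') -> L w -> L w') ->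
  gsh_le 1 L.
Proof.
move=> shK satL; apply: (@gsh_saturated_seq _ K (enum J)) => // w w' eqK.
by apply: satL => j; apply: eqK; rewrite mem_enum.
Qed.

Fixpoint word_gre (p : seq A) : gre A :=
  if p is a :: p' then GCat (GLet a) (word_gre p') else GEps.

Lemma word_greP p w : gre_lang (word_gre p) w <-> w = p.
Proof.
elim: p w => [|a p IH] w //=; split=> [[u [v [-> [-> /IH ->]]]] // | ->].
by exists [:: a], p; split=> //; split=> //; apply/IH.
Qed.

Lemma star_height_word_gre p : star_height (word_gre p) = 0.
Proof. by elim: p => //= a p ->. Qed.

Fixpoint pow_gre (E : gre A) (m : nat) : gre A :=
  if m is m'.+1 then GCat E (pow_gre E m') else GEps.

Lemma star_height_pow_gre E m : star_height (pow_gre E m) <= star_height E.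
Proof. by elim: m => //= m IH; rewrite geq_max leqnn IH. Qed.

Lemma pow_greD E m1 m2 u : gre_lang (pow_gre E (m1 + m2)) u ->
  exists u1 u2, [/\ u = u1 ++ u2, gre_lang (pow_gre E m1) u1
                                 & gre_lang (pow_gre E m2) u2].
Proof.
elim: m1 u => [|m1 IH] u /=; first by exists [::], u.
move=> [x [v [-> [Ex /IH [u1 [u2 [-> E1 E2]]]]]]].
by exists (x ++ u1), u2; split; [rewrite catA | exists x, u1 |].
Qed.

Lemma pow_greM_star E q m u : gre_lang (pow_gre E (q * m)) u ->
  star_lang (gre_lang (pow_gre E m)) u.
Proof.
elim: q u => [|q IH] u /=; first by move=> ->; exists [::].
rewrite mulSn => /pow_greD [u1 [u2 [-> E1 /IH [us [Eus ->]]]]].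
by exists (u1 :: us); split=> //= v [<- | /Eus].
Qed.

End GeneralisedStarHeight.

Section Factors.
Variable A : eqType.
Implicit Types (p w x v : seq A).

Definition all_gre : gre A := GCompl GEmpty.

Definition factor_gre p : gre A := GCat all_gre (GCat (word_gre p) all_gre).

Lemma factor_greP p w : gre_lang (factor_gre p) w <-> infix p w.
Proof.
split=> [[x [_ [-> [_ [u [y [-> [/word_greP -> _]]]]]]]] | /infixP [x [y ->]]].
  exact: infix_infix.
exists x, (p ++ y); split=> //; split=> [[]|]; exists p, y.
by split=> //; split=> [|[]]; apply/word_greP.
Qed.

Lemma star_height_factor_gre p : star_height (factor_gre p) = 0.
Proof. by rewrite /= star_height_word_gre. Qed.

Definition avoid_gre p : gre A := GCompl (factor_gre p).

Definition block_gre p : gre A := GCat (avoid_gre p) (word_gre p).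

Lemma star_height_block_gre p : star_height (block_gre p) = 0.
Proof. by rewrite /= star_height_word_gre. Qed.

Lemma infix_first p w : p != [::] -> infix p w ->
  exists x v, w = x ++ p ++ v /\ ~~ infix p x.
Proof.
move=> p_nz; elim: w => [|c w IH]; first by rewrite infixs0 (negbTE p_nz).
case pre: (prefix p (c :: w)).
  by move: pre => /prefixP [v ->] _; exists [::], v; rewrite infixs0.
rewrite infix_consl pre => /IH [x [v [ew px]]]; subst w.
exists (c :: x), v; split=> //; rewrite infix_consl negb_or px andbT.
apply: contraFN pre => /prefixP [y cx]; apply/prefixP.
by exists (y ++ p ++ v); rewrite [RHS]catA -cx.
Qed.

Section CountModulo.
Variables (p : seq A) (kap : seq A -> nat).
Hypothesis p_nz : p != [::].
Hypothesis kap_eq0 : forall w, (kap w == 0) = ~~ infix p w.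
Hypothesis kap_cat : forall x v, ~~ infix p x -> kap (x ++ p ++ v) = (kap v).+1.

Lemma avoid_greP w : gre_lang (avoid_gre p) w <-> kap w = 0.
Proof. by rewrite (rwP eqP) kap_eq0 -(rwP negP) -factor_greP. Qed.

Lemma kap_pow_block m u v :
  gre_lang (pow_gre (block_gre p) m) u -> kap (u ++ v) = m + kap v.
Proof.
elim: m u => [|m IH] u /=; first by move=> ->.
move=> [x [y [-> [[x1 [x2 [-> [/avoid_greP kx1 /word_greP ->]]]] /IH kyv]]]].
by rewrite -!catA kap_cat ?kyv // -kap_eq0 kx1.
Qed.

Lemma kap_star_block m u v : star_lang (gre_lang (pow_gre (block_gre p) m)) u ->
  kap (u ++ v) = kap v %[mod m].
Proof.
move=> [us [Bus ->]]; elim: us Bus => [|x us IH] Bus //=.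
rewrite -catA (kap_pow_block _ (Bus x _)) /=; last by left.
by rewrite -modnDml modnn add0n IH // => y usy; apply: Bus; right.
Qed.

Lemma kap_block_decomp w : exists u d,
  [/\ w = u ++ d, gre_lang (pow_gre (block_gre p) (kap w)) u & kap d = 0].
Proof.
have [m kw] : exists m, kap w = m by exists (kap w).
rewrite kw; elim: m w kw => [|m IH] w kw; first by exists [::], w.
have [|x [v [ew px]]] := @infix_first p w p_nz.
  by apply: contraT; rewrite -kap_eq0 kw.
subst w; have kv : kap v = m by apply: eq_add_S; rewrite -(kap_cat _ px).
have [u [d [-> Bu kd]]] := IH v kv.
exists ((x ++ p) ++ u), d; split=> //; first by rewrite !catA.
exists (x ++ p), u; split=> //; split=> //; exists x, p.
by split=> //; split; [apply/avoid_greP/eqP; rewrite kap_eq0 | apply/word_greP].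
Qed.

Lemma count_mod_gsh n r : 0 < n -> r < n -> gsh_le 1 (fun w => kap w %% n = r).
Proof.
move=> n_gt0 r_lt_n.
exists (GCat (GStar (pow_gre (block_gre p) n))
             (GCat (pow_gre (block_gre p) r) (avoid_gre p))); split.
  have := star_height_pow_gre (block_gre p) n; have := star_height_pow_gre (block_gre p) r.
  rewrite star_height_block_gre !leqn0 => /eqP shr /eqP shn.
  by rewrite /= shr shn star_height_word_gre.
move=> w; split.
  move=> [u [y [-> [Bu [u2 [d [-> [B2 /avoid_greP kd]]]]]]]].
  rewrite kap_star_block // -[u2 ++ d]cats0 -catA (kap_pow_block _ B2) /=.
  by rewrite cats0 kd addn0 modn_small.
move=> kw; have [u [d [ew Bu kd]]] := kap_block_decomp w; subst w.
move: Bu; rewrite (divn_eq (kap (u ++ d)) n) kw => /pow_greD [u1 [u2 [-> B1 B2]]].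
exists u1, (u2 ++ d); split; first by rewrite catA.
split; first exact: pow_greM_star B1.
by exists u2, d; split=> //; split=> //; apply/avoid_greP.
Qed.

End CountModulo.
End Factors.

Section LetterAndPairCounts.
Variable A : eqType.
Implicit Types (a b c : A) (w x v : seq A).

Lemma count_mem_mod_gsh a n r : 0 < n -> r < n ->
  gsh_le 1 (fun w => count_mem a w %% n = r).
Proof.
apply: (@count_mod_gsh _ [:: a]) => // [w | x v].
  by rewrite infix1s; apply/eqP/count_memPn.
by rewrite infix1s count_cat => /count_memPn -> /=; rewrite eqxx.
Qed.

Fixpoint npairs a b w : nat :=
  if w is c :: w' then prefix [:: a; b] w + npairs a b w' else 0.

Lemma npairs_eq0 a b w : (npairs a b w == 0) = ~~ infix [:: a; b] w.
Proof. by elim: w => [|c w IH] //=; rewrite addn_eq0 eqb0 negb_or IH. Qed.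

Lemma npairs_cat_pair a b x v : a != b -> ~~ infix [:: a; b] x ->
  npairs a b (x ++ [:: a; b] ++ v) = (npairs a b v).+1.
Proof.
move=> ab; elim: x => [_ | c x IH] /=.
  by rewrite !eqxx prefix0s (negbTE ab).
rewrite negb_or => /andP [nab /IH ->].
case: x {IH} nab => [|d x] /=; first by rewrite [b == a]eq_sym (negbTE ab) andbF.
by rewrite !prefix0s !andbT => /negbTE ->.
Qed.

Lemma npairs_mod_gsh a b n r : a != b -> 0 < n -> r < n ->
  gsh_le 1 (fun w => npairs a b w %% n = r).
Proof.
by move=> ab; apply: (@count_mod_gsh _ [:: a; b]) => // [w | x v];
  [apply: npairs_eq0 | apply: npairs_cat_pair].
Qed.

End LetterAndPairCounts.

Lemma count_mem_pairs (A : finType) (a : A) w : count_mem a w =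
  (ohead w == Some a) + npairs a a w + \sum_(d | d != a) npairs d a w.
Proof.
rewrite -addnA.
have -> : npairs a a w + \sum_(d | d != a) npairs d a w = \sum_d npairs d a w.
  by rewrite [RHS](bigD1 a).
elim: w => [|c w IH] /=; first by rewrite big1.
rewrite IH big_split /= !addnA; congr (_ + _ + _).
rewrite (bigD1 c) //= eqxx big1 ?addn0; last by move=> d /negbTE ->.
by case: w {IH} => [|e w] //=; rewrite prefix0s andbT eq_sym.
Qed.

Lemma path_infix2P (T : eqType) (e : rel T) x s :
  reflect (forall a b, infix [:: a; b] (x :: s) -> e a b) (path e x s).
Proof.
elim: s x => [|y s IH] x.
  by apply: ReflectT => a b; rewrite infixs1 /= eqseq_cons andbF.
apply: (iffP andP) => [[exy /IH eys] a b | e_infix].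
  rewrite infix_consl => /orP [/= | /eys //].
  by rewrite prefix0s andbT => /andP [/eqP -> /eqP ->].
split; first by apply: e_infix; exact: (prefix_infix [:: x; y] s).
by apply/IH => a b ab; apply: e_infix; rewrite infix_consl ab orbT.
Qed.

Lemma ohead_rev_cons (T : Type) (c : T) s : ohead (rev (c :: s)) = Some (last c s).
Proof. by rewrite lastI rev_rcons. Qed.

Definition same_profile (A : eqType) (n : nat) (w w' : seq A) : Prop :=
  [/\ ohead w = ohead w', ohead (rev w) = ohead (rev w'),
      (forall p, size p <= 2 -> infix p w = infix p w'),
      (forall a, count_mem a w = count_mem a w' %[mod n])
    & (forall a b, a != b -> npairs a b w = npairs a b w' %[mod n])].

Lemma sumr_mulrn_eq (G : zmodType) (T : finType) (F : T -> G) (x : T) :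
  (\sum_y F y *+ (y == x) = F x)%R.
Proof. by rewrite (bigD1 x) //= eqxx big1 ?addr0 // => y /negbTE ->. Qed.

Lemma mulrn_modn (G : zmodType) (n : nat) (x : G) k :
  (x *+ n = 0)%R -> (x *+ k = x *+ (k %% n))%R.
Proof.
by move=> xn0; rewrite {1}(divn_eq k n) mulrnDr mulnC mulrnA xn0 mul0rn add0r.
Qed.

Lemma mulrn_eq_mod (G : zmodType) n (x : G) k1 k2 :
  (x *+ n = 0)%R -> k1 = k2 %[mod n] -> (x *+ k1 = x *+ k2)%R.
Proof. by move=> xn0 eqk; rewrite (mulrn_modn k1 xn0) (mulrn_modn k2 xn0) eqk. Qed.

Lemma Zn_mulrn_order n : 0 < n -> forall x : Zn n, (x *+ n = 0)%R.
Proof.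
by case: n => // n _ x; apply: val_inj; rewrite /= Zp_mulrn /= modnMl.
Qed.

Section ReesWords.
Variables (G : zmodType) (I Lam : Type) (P : Lam -> I -> option G).
Variables (A : finType) (t : A -> rees G I Lam) (i0 : I) (l0 : Lam).
Local Open Scope ring_scope.

(* The defaults i0, l0, 0 are junk values, used only when t a is zero. *)
Definition row_of a : I := if t a is Some (i, _, _) then i else i0.
Definition col_of a : Lam := if t a is Some (_, _, l) then l else l0.
Definition grp_of a : G := if t a is Some (_, g, _) then g else 0.
Definition link a b : G := if P (col_of a) (row_of b) is Some p then p else 0.

Definition weight (w : seq A) : G :=
  \sum_a grp_of a *+ count_mem a w +
  \sum_(ab : A * A) link ab.1 ab.2 *+ npairs ab.1 ab.2 w.

Definition letter_ok a : bool := t a.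
Definition link_ok a b : bool := P (col_of a) (row_of b).
Definition nonzero_word c s : bool := all letter_ok (c :: s) && path link_ok c s.

Fixpoint eval_word (c : A) (s : seq A) : rees G I Lam :=
  if s is d :: s' then rees_mul P (t c) (eval_word d s') else t c.

Lemma weight1 c : weight [:: c] = grp_of c.
Proof.
rewrite /weight (eq_bigr (fun a => grp_of a *+ (a == c))) => [|a _]; last first.
  by rewrite /= addn0 eq_sym.
by rewrite sumr_mulrn_eq big1 ?addr0 // => -[a b] _; rewrite /= andbF.
Qed.

Lemma weight_cons2 c d s :
  weight [:: c, d & s] = grp_of c + link c d + weight (d :: s).
Proof.
rewrite /weight addrACA -(sumr_mulrn_eq grp_of c).
rewrite -(sumr_mulrn_eq (fun ab : A * A => link ab.1 ab.2) (c, d)).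
rewrite -!big_split /=; congr (_ + _); apply: eq_bigr.
  by move=> a _; rewrite eq_sym -mulrnDr.
by move=> [a b] _; rewrite /= prefix0s andbT -mulrnDr.
Qed.

Lemma nonzero_word_cons c d s :
  nonzero_word c (d :: s) = [&& letter_ok c, link_ok c d & nonzero_word d s].
Proof.
rewrite /nonzero_word /=.
by case: (letter_ok c); case: (link_ok c d); rewrite ?andbF.
Qed.

Lemma eval_wordE c s : eval_word c s =
  if nonzero_word c s then Some (row_of c, weight (c :: s), col_of (last c s))
  else None.
Proof.
elim: s c => [|d s IH] c.
  rewrite /nonzero_word /= andbT weight1 /letter_ok /row_of /col_of /grp_of.
  by case: (t c) => [[[i g] l]|].
rewrite /= IH nonzero_word_cons weight_cons2 /link_ok /link.
move: (row_of d) (col_of (last d s)) (weight (d :: s)) => i' l' g'.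
case: (nonzero_word d s); rewrite /letter_ok /row_of /col_of /grp_of.
  by case: (t c) => [[[i g] l]|] //=; case: (P l i').
by rewrite !andbF; case: (t c) => [[[i g] l]|].
Qed.

Variables (n : nat) (charG : forall x : G, x *+ n = 0).

Lemma weight_eq_mod w w' : ohead w = ohead w' ->
  (forall a, count_mem a w = count_mem a w' %[mod n]) ->
  (forall a b, a != b -> npairs a b w = npairs a b w' %[mod n]) ->
  weight w = weight w'.
Proof.
move=> hw letters pairs; rewrite /weight; congr (_ + _); apply: eq_bigr.
  by move=> a _; apply: mulrn_eq_mod.
move=> [a b] _ /=; apply: mulrn_eq_mod => //.
have [<-{b} | ab] := eqVneq a b; last exact: pairs.
(* npairs a a is read off from the count of a and of the factors da with d != a. *)
have others :
    (\sum_(d | d != a) npairs d a w = \sum_(d | d != a) npairs d a w' %[mod n])%N.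
  rewrite -modn_summ -[in RHS]modn_summ; congr (_ %% _)%N.
  by apply: eq_bigr => d da; apply: pairs.
move: (letters a); rewrite !count_mem_pairs hw -!addnA => /eqP.
by rewrite eqn_modDl -modnDmr others modnDmr eqn_modDr => /eqP.
Qed.

Lemma eval_word_profile c s c' s' : same_profile n (c :: s) (c' :: s') ->
  eval_word c s = eval_word c' s'.
Proof.
move=> [[<-{c'}] last_eq factors_eq counts_eq npairs_eq].
have nz_eq : nonzero_word c s = nonzero_word c s'.
  have letters_eq : c :: s =i c :: s' by move=> a; rewrite -!infix1s factors_eq.
  rewrite /nonzero_word (eq_all_r letters_eq); congr andb.
  by apply/path_infix2P/path_infix2P => ok a b;
    [rewrite -factors_eq | rewrite factors_eq] => // /ok.
move: last_eq; rewrite !ohead_rev_cons => -[last_eq].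
by rewrite !eval_wordE nz_eq last_eq (weight_eq_mod _ counts_eq npairs_eq).
Qed.

End ReesWords.

Section ProfileTests.
Variables (A : finType) (n : nat).
Hypothesis n_gt0 : 0 < n.

Definition profile_test
    (j : option A + option A + A + (A * A) + (A * 'I_n) + (A * A * 'I_n)) :
    seq A -> Prop :=
  match j with
  | inl (inl (inl (inl (inl o)))) => fun w => ohead w = o
  | inl (inl (inl (inl (inr o)))) => fun w => ohead (rev w) = o
  | inl (inl (inl (inr a))) => fun w => a \in w
  | inl (inl (inr (a, b))) => fun w => infix [:: a; b] w
  | inl (inr (a, r)) => fun w => count_mem a w %% n = r
  | inr (a, b, r) => fun w => a != b /\ npairs a b w %% n = r
  end.

Lemma gsh_profile_test j : gsh_le 1 (profile_test j).
Proof.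
case: j => [[[[[[a|]|[a|]]|a]|[a b]]|[a r]]|[[a b] r]] /=.
- exists (GCat (GLet a) (all_gre A)); split=> // w.
  split=> [[u [v [-> [-> _]]]] // | ].
  by case: w => // c w [->]; exists [:: a], w; split=> //; split=> // [].
- by exists GEps; split=> // -[].
- exists (GCat (all_gre A) (GLet a)); split=> // w.
  split=> [[u [v [-> [_ ->]]]] | ]; first by rewrite cats1 rev_rcons.
  case/lastP: w => [|u c] //; rewrite rev_rcons => -[->].
  by exists u, [:: a]; split; [rewrite cats1 | split=> // []].
- exists GEps; split=> // w; split=> [-> // | ].
  by case/lastP: w => // u c; rewrite rev_rcons.
- exists (factor_gre [:: a]); split; first by rewrite star_height_factor_gre.
  by move=> w; rewrite factor_greP infix1s.
- exists (factor_gre [:: a; b]); split; first by rewrite star_height_factor_gre.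
  exact: factor_greP.
- exact: count_mem_mod_gsh.
have [<- | ab] := eqVneq a b.
  by apply: (gsh_ext (gsh_False _ 1)) => w; split=> // -[/eqP].
apply: (gsh_ext (npairs_mod_gsh ab n_gt0 (ltn_ord r))) => w.
by split=> [|[]].
Qed.

Lemma same_profile_of_tests w w' :
  (forall j, profile_test j w <-> profile_test j w') -> same_profile n w w'.
Proof.
move=> tests; split.
- by case: (tests (inl (inl (inl (inl (inl (ohead w))))))) => /(_ erefl) ->.
- by case: (tests (inl (inl (inl (inl (inr (ohead (rev w)))))))) => /(_ erefl) ->.
- case=> [|a [|b [|? ?]]] // _; first by rewrite !infix0s.
    by rewrite !infix1s; apply/idP/idP => /(tests (inl (inl (inl (inr a))))).
  by apply/idP/idP => /(tests (inl (inl (inr (a, b))))).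
- move=> a; pose r := Ordinal (ltn_pmod (count_mem a w) n_gt0).
  by case: (tests (inl (inr (a, r)))) => /(_ erefl) ->.
move=> a b ab; pose r := Ordinal (ltn_pmod (npairs a b w) n_gt0).
by case: (tests (inr (a, b, r))) => /(_ (conj ab erefl)) [_ ->].
Qed.

Lemma gsh_profile_saturated (L : seq A -> Prop) :
  (forall w w', same_profile n w w' -> L w -> L w') -> gsh_le 1 L.
Proof.
move=> satL; apply: (gsh_saturated gsh_profile_test) => w w' tests.
exact/satL/same_profile_of_tests.
Qed.

End ProfileTests.

Theorem theorem3p3 (n : nat) (hn : (0 < n)%N) (I Lam : Type) (i0 : I) (l0 : Lam)
  (P : Lam -> I -> option (Zn n)) (A : finType) (Lang : seq A -> Prop) :
  recognised (rees_mul P) Lang -> gsh_le 1 Lang.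
Proof.
move=> [psi [X [psi_cat Lang_psi]]].
have psi_eval c s : psi (c :: s) = eval_word P (fun a => psi [:: a]) c s.
  by elim: s c => [|d s IH] c //=; rewrite -IH -psi_cat.
apply: (gsh_profile_saturated hn) => w w' same_ww'; rewrite !Lang_psi => -[w_nz Xw].
case: w w_nz same_ww' Xw => [//|c s] _; case: w' => [|c' s'] same_ww'.
  by case: same_ww'.
by rewrite !psi_eval (eval_word_profile _ _ i0 l0 (Zn_mulrn_order hn) same_ww').
Qed.
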